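(* Let $q=p^m$ with $p$ prime, let $\gamma$ be such that $\mathbb{F}_q=\mathbb{F}_p[\gamma]$, and let $t=\lfloor\frac{m-1}{2}\rfloor$. Let $n,k$ be integers with $4\le k\le\frac{n-1}{2}$ and $n\le p^t$, and let $h=k+1$. Let $\alpha_1,\dots,\alpha_n$ be pairwise distinct elements of $\mathbb{F}_q$ of the form $\alpha_i=\gamma^t+\sum_{j=0}^{t-1}a_{ij}\gamma^j$ with $a_{ij}\in\mathbb{F}_p$. Let $C_{h,k}$ be the linear code generated by the $k\times n$ matrix whose rows are $(\alpha_1^{e},\dots,\alpha_n^{e})$ for $e=0,1,\dots,k-2$ and $e=h$. If $p\nmid\frac{k(k+1)}{2}$, then $C_{h,k}$ is a non-GRS MDS code over $\mathbb{F}_q$.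
   Context: Convention: $0^0=1$. A linear code is MDS if its parameters $[n,k,d]$ satisfy $d=n-k+1$. For pairwise distinct $a_1,\dots,a_n\in\mathbb{F}_q$ and $w\in(\mathbb{F}_q^* )^n$, $GRS(n,k,\{a_i\},w)=\{(w_1f(a_1),\dots,w_nf(a_n)) : f\in\mathbb{F}_q[x],\ \deg f\le k-1\}$. Two codes are (monomially) equivalent if one is obtained from the other by permuting coordinates and scaling coordinates by nonzero scalars. A non-GRS MDS code is an MDS code not equivalent to any GRS code. *)

From HB Require Import structures.
From mathcomp Require Import all_boot all_order all_algebra.
From mathcomp Require Import fingroup perm.
Set Implicit Arguments. Unset Strict Implicit. Unset Printing Implicit Defensive.
Import Order.TTheory GRing.Theory.
Local Open Scope ring_scope.

Section Codes.
Variables (F : fieldType) (n : nat).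

Definition wt (v : 'rV[F]_n) : nat := #|[set i : 'I_n | v 0 i != 0]|.

Definition in_code (r : nat) (G : 'M[F]_(r, n)) (v : 'rV[F]_n) : bool :=
  (v <= G)%MS.

Definition min_dist (r : nat) (G : 'M[F]_(r, n)) (d : nat) : Prop :=
  (exists2 v, in_code G v /\ v != 0 & wt v = d) /\
  (forall v, in_code G v -> v != 0 -> (d <= wt v)%N).

Definition is_MDS (r : nat) (G : 'M[F]_(r, n)) : Prop :=
  min_dist G (n - \rank G + 1)%N.

Definition in_GRS (k : nat) (a w : 'I_n -> F) (v : 'rV[F]_n) : Prop :=
  exists2 f : {poly F}, (size f <= k)%N & v = \row_j (w j * f.[a j]).

Definition equiv_GRS (r : nat) (G : 'M[F]_(r, n)) : Prop :=
  exists (k : nat) (a w : 'I_n -> F) (s : 'S_n) (lam : 'I_n -> F),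
    injective a /\ (forall i, w i != 0) /\ (forall i, lam i != 0) /\
    (forall v : 'rV[F]_n,
        in_code G v <-> in_GRS k a w (\row_j (lam j * v 0 (s j)))).

Definition non_GRS_MDS (r : nat) (G : 'M[F]_(r, n)) : Prop :=
  is_MDS G /\ ~ equiv_GRS G.

End Codes.

Definition Chk_gen (F : fieldType) (n k h : nat) (alpha : 'I_n -> F)
  : 'M[F]_(k, n) :=
  \matrix_(i < k, j < n) alpha j ^+ (if (i < k.-1)%N then (i : nat) else h).

(* F = F_p[gamma]: every element is a polynomial in gamma with coefficients
   in the prime field (elements c%:R, c : nat) *)
Definition generates_over_prime (F : fieldType) (gamma : F) : Prop :=
  forall x : F, exists s : seq nat,
    x = \sum_(j < size s) (nth 0%N s j)%:R * gamma ^+ j.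

(* A nonzero codeword of C_{h,k} evaluates f = sum_e c_e X^e, e in {0..k-2, k+1}, whose
   coefficients of X^(k-1) and X^k vanish.  If f had k roots b_1..b_k then
   f = (q0 + q1 X) prod (X - b_i), and comparing these two coefficients gives
   q1 h2(b) = 0, where h2 is the complete homogeneous symmetric polynomial of degree 2.
   Each alpha_i is A_i(gamma) with A_i in F_p[X] monic of degree t, so h2(A_i1..A_ik)
   has degree 2t < m and leading coefficient binom(k+1, 2), nonzero in F_p; since the
   minimal polynomial of gamma over F_p has degree m, h2(alpha_i1..alpha_ik) <> 0 and
   the code is MDS.
   It is not GRS: a GRS code of dimension k' > k cannot fit in a k-dimensional code, and
   if k' <= k the products of pairs of codewords lie in a code of dimension 2k - 1,
   whereas the products of the rows of C_{h,k} give the 2k independent Vandermonde rows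
   alpha^e, e < 2k. *)

From HB Require Import structures.
From mathcomp Require Import all_boot all_order all_algebra all_field.
From mathcomp Require Import fingroup perm ring zify.
Set Implicit Arguments. Unset Strict Implicit. Unset Printing Implicit Defensive.
Import GRing.Theory.
Local Open Scope ring_scope.

Section CompleteHomogeneous.
Variable R : comNzRingType.

(* h2 s = sum_(i <= j) s_i s_j *)
Fixpoint hsym2 (s : seq R) : R :=
  if s is b :: s' then b * \sum_(x <- s) x + hsym2 s' else 0.

(* The factor 'X^2 shifts the relevant coefficients away from truncated subtraction. *)
Lemma coef_prod_XsubC_lead (s : seq R) :
  ('X^2 * \prod_(b <- s) ('X - b%:P))`_(size s).+2 = 1.
Proof.
rewrite coefXnM subn2 /=.
by have := lead_coef_prod_XsubC s xpredT id; rewrite /lead_coef size_prod_XsubC.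
Qed.

Lemma coef_prod_XsubC_hsym2 (s : seq R) :
  let P := 'X^2 * \prod_(b <- s) ('X - b%:P) in
  P`_(size s).+1 = - \sum_(b <- s) b /\
  P`_(size s) = (\sum_(b <- s) b) ^+ 2 - hsym2 s.
Proof.
elim: s => [|b s [IH1 IH2]] /=.
  by rewrite !big_nil mulr1 !coefXn oppr0 expr0n addr0.
rewrite big_cons mulrCA mulrBl !coefB !coefXM !coefCM /= IH1 IH2.
by rewrite coef_prod_XsubC_lead !big_cons; split; ring.
Qed.

End CompleteHomogeneous.

Lemma rmorph_hsym2 (R S : comNzRingType) (f : {rmorphism R -> S}) (s : seq R) :
  f (hsym2 s) = hsym2 (map f s).
Proof.
elim: s => [|b s IH] /=; first exact: rmorph0.
by rewrite rmorphD rmorphM rmorph_sum IH !big_cons big_map.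
Qed.

Lemma hsym2_monic (R : comNzRingType) (t : nat) (u : seq {poly R}) :
  all (fun q => (q \is monic) && (size q == t.+1)) u ->
  (size (hsym2 u) <= (t.*2).+1)%N /\ (hsym2 u)`_(t.*2) = 'C((size u).+1, 2)%:R.
Proof.
elim: u => [|b u IH] hall; first by rewrite size_poly0 coef0.
case/andP: (hall) => _ /IH[IHs IHc].
have bx x : x \in b :: u -> size (b * x) = (t.*2).+1 /\ (b * x)`_(t.*2) = 1.
  move=> xu; case/andP: (allP hall _ (mem_head _ _)) => mb /eqP sb.
  case/andP: (allP hall _ xu) => mx /eqP sx.
  have sbx : size (b * x) = (t.*2).+1.
    by rewrite size_monicM ?monic_neq0 // sb sx -addnn addnS.
  by split=> //; have /monicP := rpredM mb mx; rewrite /lead_coef sbx.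
rewrite /= mulr_sumr; split.
  rewrite (leq_trans (size_polyD _ _)) // geq_max IHs andbT.
  rewrite (leq_trans (size_sum _ _ _)) //; apply/bigmax_leqP_seq => x xu _.
  by rewrite (bx x xu).1.
rewrite coefD coef_sum IHc (eq_big_seq (fun=> 1)) => [|x /bx[]//].
by rewrite big_const_seq count_predT iter_addr addr0 [in RHS]binS bin1 natrD addrC.
Qed.

(* Write f = (q0 + q1 X) prod (X - b); the two vanishing coefficients give q1 h2(s) = 0. *)
Lemma poly_gap_roots_eq0 (F : fieldType) (f : {poly F}) (s : seq F) :
  uniq s -> all (root f) s -> (size f <= (size s).+2)%N ->
  f`_(size s) = 0 -> f`_(size s).-1 = 0 -> hsym2 s != 0 -> f = 0.
Proof.
move=> s_uniq f_s size_f f_top f_next; apply: contraNeq => f_nz.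
set P := \prod_(b <- s) ('X - b%:P).
have [Q fE] : exists Q, f = Q * P by apply: uniq_roots_prod_XsubC; rewrite ?uniq_rootsE.
have Q_nz : Q != 0 by apply: contraNneq f_nz => Q0; rewrite fE Q0 mul0r.
have size_Q : (size Q <= 2)%N.
  move: size_f; rewrite fE size_Mmonic ?monic_prod_XsubC // size_prod_XsubC.
  by rewrite addnS -addn2 addnC leq_add2l.
have QE : Q = (Q`_0)%:P + (Q`_1)%:P * 'X.
  apply/polyP => j; rewrite coefD coefC coefMX coefC.
  by case: j => [|[|j]] /=; rewrite ?addr0 ?add0r // nth_default // (leq_trans size_Q).
have Y_lead := coef_prod_XsubC_lead s; have [Y_top Y_next] := coef_prod_XsubC_hsym2 s.
set Y := 'X^2 * P in Y_lead Y_top Y_next.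
set e1 := \sum_(b <- s) b in Y_top Y_next.
have XXf : 'X^2 * f = Q`_0 *: Y + Q`_1 *: ('X * Y).
  by rewrite fE mulrCA {1}QE mulrDl -!mul_polyC [in RHS]mulrA.
have eq_top : Q`_0 - Q`_1 * e1 = 0.
  have := congr1 (fun q : {poly F} => q`_(size s).+2) XXf.
  rewrite /= coefXnM subn2 /= f_top coefD !coefZ coefXM /=.
  by rewrite Y_lead Y_top mulr1 mulrN => <-.
have eq_next : Q`_1 * (e1 ^+ 2 - hsym2 s) - Q`_0 * e1 = 0.
  have := congr1 (fun q : {poly F} => q`_(size s).+1) XXf.
  rewrite /= coefXnM subn2 /= f_next if_same coefD !coefZ coefXM /=.
  by rewrite Y_top Y_next mulrN addrC => <-.
have Q0E : Q`_0 = Q`_1 * e1 by apply/eqP; rewrite -subr_eq0 eq_top.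
have Q1_nz : Q`_1 != 0.
  by apply: contraNneq Q_nz => Q10; rewrite QE Q0E Q10 mul0r polyC0 mul0r addr0.
have : Q`_1 * hsym2 s = - (Q`_1 * (e1 ^+ 2 - hsym2 s) - Q`_0 * e1) by rewrite Q0E; ring.
by rewrite eq_next oppr0 => /eqP; rewrite mulf_eq0 (negPf Q1_nz).
Qed.

Lemma horner_alg_neq0 (K : fieldType) (L : fieldExtType K) (x : L) (g : {poly K}) :
  <<1; x>>%VS = fullv -> g != 0 -> (size g <= \dim {:L})%N -> horner_alg x g != 0.
Proof.
move=> genx g_nz; apply: contraTN => /eqP gx0; rewrite -ltnNge.
have g1 : map_poly (in_alg L) g \is a polyOver 1%VS by apply/polyOver1P; exists g.
have gx : root (map_poly (in_alg L) g) x by exact/rootP.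
have := dvdp_leq _ (minPoly_dvdp g1 gx).
rewrite map_poly_eq0 g_nz size_minPoly adjoin_degreeE dimv1 divn1 genx size_map_poly.
exact.
Qed.

Lemma hsym2_horner_alg_neq0 (K : fieldType) (L : fieldExtType K) (x : L) t
    (u : seq {poly K}) :
  <<1; x>>%VS = fullv -> (t.*2 < \dim {:L})%N ->
  all (fun q => (q \is monic) && (size q == t.+1)) u ->
  'C((size u).+1, 2)%:R != 0 :> K ->
  hsym2 (map (horner_alg x) u) != 0.
Proof.
move=> genx tL /hsym2_monic[size_h coef_h] binK; rewrite -rmorph_hsym2.
apply: horner_alg_neq0 => //; last exact: leq_trans size_h tL.
by apply: contraNneq binK => h0; rewrite -coef_h h0 coef0.
Qed.

Section LinearCodes.
Variables (F : fieldType) (n : nat).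

Definition zeros (v : 'rV[F]_n) : {set 'I_n} := [set j | v 0 j == 0].

Lemma zeros0 : zeros 0 = setT.
Proof. by apply/setP => j; rewrite !inE mxE eqxx. Qed.

Lemma wt_zeros (v : 'rV[F]_n) : wt v = (n - #|zeros v|)%N.
Proof.
have := cardsC (zeros v); rewrite card_ord => nE.
by rewrite -[X in (X - _)%N]nE addKn; apply: eq_card => j; rewrite !inE.
Qed.

Lemma row_dependent m r (M : 'M[F]_(m, r)) :
  (\rank M < m)%N -> exists2 c : 'rV_m, c != 0 & c *m M = 0.
Proof.
move=> rkM; have /rowV0Pn[c /sub_kermxP cM c_nz] : kermx M != 0.
  by rewrite kermx_eq0 /row_free ltn_eqF.
by exists c.
Qed.

Lemma MDS_of_zeros k (G : 'M[F]_(k, n)) : (0 < k <= n)%N ->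
  (forall c : 'rV_k, c != 0 -> (#|zeros (c *m G)| < k)%N) -> is_MDS G.
Proof.
move=> /andP[k_gt0 k_le_n] zG.
have rfG : row_free G.
  apply/inj_row_free => c cG0; apply/eqP/negPn/negP => /zG.
  by rewrite cG0 zeros0 cardsT card_ord; lia.
have wtG c : c != 0 -> (n - k + 1 <= wt (c *m G))%N.
  by move=> /zG; rewrite wt_zeros; lia.
rewrite /is_MDS (eqP rfG); split; last first.
  move=> v /mulmxKpV vG v_nz; rewrite -vG wtG //.
  by apply: contraNneq v_nz => c0; rewrite -vG c0 mul0mx.
have kn : (k.-1 <= n)%N by lia.
have [c c_nz cG0] : exists2 c : 'rV_k, c != 0 & c *m colsub (widen_ord kn) G = 0.
  by apply: row_dependent; rewrite (leq_ltn_trans (rank_leq_col _)) ?ltn_predL.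
exists (c *m G); first by split; [exact: submxMl | rewrite mulmx_free_eq0].
apply/eqP; rewrite eqn_leq wtG // andbT wt_zeros.
have sub : widen_ord kn @: setT \subset zeros (c *m G).
  apply/subsetP => _ /imsetP[l _ ->]; rewrite inE.
  by have := congr1 (fun A : 'rV_k.-1 => A 0 l) cG0; rewrite mulmx_colsub !mxE => ->.
have := subset_leq_card sub; rewrite card_imset ?cardsT ?card_ord.
  by move: #|_| => z; lia.
by move=> i j /(congr1 val) /= /val_inj.
Qed.

End LinearCodes.

Section EvaluationMatrices.
Variables (F : fieldType) (n : nat).

Definition eval_mx N (f : 'I_N -> {poly F}) (y v : 'I_n -> F) : 'M[F]_(N, n) :=
  \matrix_(e, j) (v j * (f e).[y j]).

Lemma horner_rVpoly_sum d (c : 'rV[F]_d) y :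
  (rVpoly c).[y] = \sum_(i < d) c 0 i * y ^+ i.
Proof. by rewrite horner_poly; apply: eq_bigr => i _; rewrite valK. Qed.

Lemma vandermonde_row_free N (x u : 'I_n -> F) :
  injective x -> (N <= n)%N -> (forall j, u j != 0) ->
  row_free (eval_mx (fun e : 'I_N => 'X^e) x u).
Proof.
move=> x_inj Nn u_nz; apply/inj_row_free => c cW0.
have c_root j : root (rVpoly c) (x j).
  have := congr1 (fun A : 'rV_n => A 0 j) cW0; rewrite !mxE => /eqP.
  rewrite (eq_bigr (fun e => u j * (c 0 e * x j ^+ e))) => [|e _]; last first.
    by rewrite mxE hornerXn mulrCA.
  by rewrite -mulr_sumr mulf_eq0 (negPf (u_nz j)) -horner_rVpoly_sum.
have : rVpoly c = 0.
  apply: (@roots_geq_poly_eq0 _ _ (map x (enum 'I_n))).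
  - by apply/allP => _ /mapP[j _ ->].
  - by rewrite map_inj_uniq ?enum_uniq.
  - by rewrite size_map size_enum_ord (leq_trans (size_poly _ _)).
by move/(congr1 (poly_rV (d := N))); rewrite rVpolyK linear0.
Qed.

Lemma mxrank_eval_mx N d (f : 'I_N -> {poly F}) (y v : 'I_n -> F) :
  (forall e, size (f e) <= d)%N -> (\rank (eval_mx f y v) <= d)%N.
Proof.
move=> size_f; apply: leq_trans (rank_leq_row (eval_mx (fun i : 'I_d => 'X^i) y v)).
apply/mxrankS/submxP; exists (\matrix_(e < N, i < d) (f e)`_i).
apply/matrixP => e j; rewrite !mxE (horner_coef_wide _ (size_f e)) mulr_sumr.
by apply: eq_bigr => i _; rewrite !mxE hornerXn mulrCA.
Qed.

Lemma GRS_equiv_dim_leq r k (G : 'M[F]_(r, n)) (a w lam : 'I_n -> F) (s : 'S_n) :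
  injective a -> (forall j, w j != 0) -> (forall j, lam j != 0) -> (r < n)%N ->
  (forall v : 'rV_n, in_GRS k a w (\row_j (lam j * v 0 (s j))) -> in_code G v) ->
  (k <= r)%N.
Proof.
move=> a_inj w_nz lam_nz rn GRS_G; rewrite leqNgt; apply/negP => rk.
pose t := (s^-1)%g.
pose W := eval_mx (fun i : 'I_(r.+1) => 'X^i) (a \o t) (fun l => w (t l) / lam (t l)).
have rfW : row_free W.
  apply: vandermonde_row_free => // [l1 l2 /a_inj /perm_inj // | l].
  by rewrite mulf_neq0 ?invr_eq0.
have WG : (W <= G)%MS.
  apply/row_subP => i; apply: GRS_G; exists 'X^i.
    by rewrite size_polyXn (leq_trans _ rk).
  by apply/rowP => j; rewrite !mxE /t /= !permK hornerXn mulrA mulrCA divff ?mulr1.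
by move: (mxrankS WG); rewrite (eqP rfW) leqNgt (leq_ltn_trans (rank_leq_row G)).
Qed.

End EvaluationMatrices.

Section ChkCode.
Variables (F : fieldType) (n k : nat) (alpha : 'I_n -> F).

Definition chk_exp (i : 'I_k) : nat := if (i < k.-1)%N then i : nat else k.+1.

Definition chk_poly (c : 'rV[F]_k) : {poly F} := \sum_(i < k) c 0 i *: 'X^(chk_exp i).

Lemma chk_exp_inj : injective chk_exp.
Proof.
move=> i j; rewrite /chk_exp => e; apply: ord_inj; move: e (ltn_ord i) (ltn_ord j).
by case: (ltnP i k.-1); case: (ltnP j k.-1); lia.
Qed.

(* The exponents of C_{h,k} add up to every e < 2k; this is where 4 <= k is needed. *)
Lemma chk_exp_cover (e : 'I_(k.*2)) : (4 <= k)%N ->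
  exists p : 'I_k * 'I_k, (chk_exp p.1 + chk_exp p.2)%N = e.
Proof.
move=> k4; have e_lt := ltn_ord e; rewrite /chk_exp.
case: (leqP e (k.-2).*2) => e_le.
  have i_lt : (minn e k.-2 < k)%N by lia.
  have j_lt : (e - minn e k.-2 < k)%N by lia.
  by exists (Ordinal i_lt, Ordinal j_lt) => /=; rewrite ifT ?ifT; lia.
have i_lt : (e - k.+1 < k)%N by lia.
have j_lt : (k.-1 < k)%N by lia.
by exists (Ordinal i_lt, Ordinal j_lt) => /=; rewrite ltnn ifT; lia.
Qed.

Lemma coef_chk_poly c l : (chk_poly c)`_l = \sum_(i < k | chk_exp i == l) c 0 i.
Proof.
rewrite coef_sum [RHS]big_mkcond; apply: eq_bigr => i _.
by rewrite coefZ coefXn eq_sym; case: eqP; rewrite ?mulr1 ?mulr0.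
Qed.

Lemma chk_poly_eq0 c : chk_poly c = 0 -> c = 0.
Proof.
move=> c0; apply/rowP => i; rewrite mxE -[LHS]/(c 0 i).
have := coef_chk_poly c (chk_exp i); rewrite c0 coef0 (big_pred1 i) // => l /=.
by rewrite (inj_eq chk_exp_inj).
Qed.

Lemma size_chk_poly c : (size (chk_poly c) <= k.+2)%N.
Proof.
apply/leq_sizeP => l kl; rewrite coef_chk_poly big1 // => i /eqP il.
by move: (ltn_ord i) kl; rewrite -il /chk_exp; case: (ltnP i k.-1); lia.
Qed.

Lemma coef_chk_poly_gap c : (chk_poly c)`_k = 0 /\ (chk_poly c)`_k.-1 = 0.
Proof.
by split; rewrite coef_chk_poly big1 // => i /eqP; move: (ltn_ord i);
  rewrite /chk_exp; case: (ltnP i k.-1); lia.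
Qed.

Lemma mulmx_Chk_gen c j : (c *m Chk_gen k k.+1 alpha) 0 j = (chk_poly c).[alpha j].
Proof.
rewrite !mxE horner_sum; apply: eq_bigr => i _.
by rewrite hornerZ hornerXn mxE.
Qed.

Lemma Chk_gen_MDS : injective alpha -> (0 < k <= n)%N ->
  (forall l : seq 'I_n, uniq l -> size l = k -> hsym2 (map alpha l) != 0) ->
  is_MDS (Chk_gen k k.+1 alpha).
Proof.
move=> alpha_inj kn h2_nz; apply: MDS_of_zeros => // c c_nz.
rewrite ltnNge; apply: contra c_nz => kZ; apply/eqP/chk_poly_eq0.
set l := take k (enum (zeros (c *m Chk_gen k k.+1 alpha))).
have l_uniq : uniq l by rewrite take_uniq ?enum_uniq.
have l_size : size l = k by rewrite size_takel // -cardE.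
have [top next] := coef_chk_poly_gap c.
apply: (@poly_gap_roots_eq0 _ _ (map alpha l)); rewrite ?size_map ?l_size //.
- by rewrite map_inj_uniq.
- apply/allP => _ /mapP[j /mem_take jZ ->]; apply/rootP; rewrite -mulmx_Chk_gen.
  by move: jZ; rewrite mem_enum inE => /eqP.
- exact: size_chk_poly.
- exact: h2_nz.
Qed.

(* Squaring: the pairwise products of the rows of C_{h,k} are the 2k independent rows
   lam^2 (alpha o s)^e, while products of codewords of a GRS code of dimension at most k
   are evaluations of polynomials of size at most 2k - 1. *)
Lemma Chk_gen_not_GRS_small k' (a w lam : 'I_n -> F) (s : 'S_n) :
  injective alpha -> (4 <= k)%N -> (k.*2 <= n)%N -> (forall j, lam j != 0) ->
  (k' <= k)%N ->
  (forall v : 'rV_n, in_code (Chk_gen k k.+1 alpha) v ->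
     in_GRS k' a w (\row_j (lam j * v 0 (s j)))) ->
  False.
Proof.
move=> alpha_inj k4 kn lam_nz k'k GRS.
have row_GRS (i : 'I_k) : exists2 f : {poly F}, (size f <= k)%N &
    forall j, lam j * alpha (s j) ^+ chk_exp i = w j * f.[a j].
  have [f size_f fE] := GRS _ (row_sub i (Chk_gen k k.+1 alpha)).
  exists f => [|j]; first exact: leq_trans size_f k'k.
  by have := congr1 (fun v : 'rV_n => v 0 j) fE; rewrite !mxE.
have [f size_f fE] := fin_all_exists2 row_GRS.
have [pr prE] := fin_all_exists (fun e => chk_exp_cover e k4).
pose h (e : 'I_(k.*2)) := f (pr e).1 * f (pr e).2.
have WE : eval_mx (fun e : 'I_(k.*2) => 'X^e) (alpha \o s) (fun j => lam j ^+ 2) =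
          eval_mx h a (fun j => w j ^+ 2).
  apply/matrixP => e j; rewrite !mxE /= hornerXn hornerM -(prE e) exprD.
  transitivity ((lam j * alpha (s j) ^+ chk_exp (pr e).1) *
                (lam j * alpha (s j) ^+ chk_exp (pr e).2)); first by ring.
  by rewrite !fE; ring.
have rfW := vandermonde_row_free (N := k.*2) (inj_comp alpha_inj (@perm_inj _ s)) kn
  (fun j => expf_neq0 2 (lam_nz j)).
have size_h e : (size (h e) <= (k.*2).-1)%N.
  rewrite (leq_trans (size_mul_leq _ _)) //.
  by move: (size_f (pr e).1) (size_f (pr e).2); lia.
by move: (mxrank_eval_mx a (fun j => w j ^+ 2) size_h); rewrite -WE (eqP rfW); lia.
Qed.

Lemma Chk_gen_not_GRS : injective alpha -> (4 <= k)%N -> (k.*2 <= n)%N ->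
  ~ equiv_GRS (Chk_gen k k.+1 alpha).
Proof.
move=> alpha_inj k4 kn [k' [a [w [s [lam [a_inj [w_nz [lam_nz GRS]]]]]]]].
apply: (Chk_gen_not_GRS_small alpha_inj k4 kn lam_nz _ (fun v => (GRS v).1)).
by apply: (GRS_equiv_dim_leq a_inj w_nz lam_nz _ (fun v => (GRS v).2)); lia.
Qed.

End ChkCode.

Lemma monic_size_XnD (R : nzRingType) t (q : {poly R}) :
  (size q <= t)%N -> ('X^t + q \is monic) && (size ('X^t + q) == t.+1).
Proof.
move=> size_q; have size_lt : (size q < size ('X^t : {poly R}))%N by rewrite size_polyXn.
by rewrite monicE lead_coefDl // lead_coefXn size_polyDl // size_polyXn !eqxx.
Qed.

Section PrimeField.
Variables (F : finFieldType) (p : nat) (chF : p \in [pchar F]).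
Local Notation L := (pPrimeCharType chF).

Lemma dim_pPrimeChar m : #|F| = (p ^ m)%N -> \dim {: L : vectType 'F_p} = m.
Proof. by move=> cardF; rewrite pprimeChar_dimf cardF pfactorK // (pcharf_prime chF). Qed.

Lemma adjoin_prime_generator (gamma : F) :
  generates_over_prime gamma -> <<1; (gamma : L)>>%VS = fullv.
Proof.
move=> gen; apply/eqP; rewrite eqEsubv subvf /=; apply/subvP => x _.
have [s ->] := gen x; apply: rpred_sum => j _.
by apply: rpredM; [exact: rpred_nat | exact/rpredX/memv_adjoin].
Qed.

Lemma horner_alg_prime_poly (gamma : F) t (c : nat -> nat) :
  gamma ^+ t + \sum_(j < t) (c j)%:R * gamma ^+ j =
  horner_alg (gamma : L) ('X^t + \sum_(j < t) (c j)%:R *: 'X^j).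
Proof.
rewrite rmorphD rmorphXn /= horner_algX rmorph_sum /=; congr (_ + _).
apply: eq_bigr => j _; rewrite linearZ /= rmorphXn /= horner_algX.
by rewrite -[_ *: _]mulr_algl mulr1 scaler_nat.
Qed.

End PrimeField.

Theorem theorem4p7 (F : finFieldType) (p m : nat) (gamma : F)
  (n k : nat) (alpha : 'I_n -> F) (a : 'I_n -> nat -> nat) :
  prime p -> p \in [pchar F] -> #|F| = (p ^ m)%N ->
  generates_over_prime gamma ->
  let t := (m.-1)./2 in
  (4 <= k)%N -> (2 * k + 1 <= n)%N -> (n <= p ^ t)%N ->
  let h := k.+1 in
  injective alpha ->
  (forall i, alpha i = gamma ^+ t + \sum_(j < t) (a i j)%:R * gamma ^+ j) ->
  ~~ (p %| (k * k.+1) %/ 2)%N ->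
  non_GRS_MDS (Chk_gen k h alpha).
Proof.
move=> p_prime chF cardF gen t k4 kn npt h alpha_inj alphaE p_ndvd.
split; last by apply: Chk_gen_not_GRS => //; lia.
apply: Chk_gen_MDS => [//||l l_uniq l_size]; first lia.
pose A i : {poly 'F_p} := 'X^t + \sum_(j < t) (a i j)%:R *: 'X^j.
have -> : map alpha l = map (horner_alg (gamma : pPrimeCharType chF)) (map A l).
  by rewrite -map_comp; apply: eq_map => i; rewrite /= alphaE (horner_alg_prime_poly chF).
have m_gt0 : (0 < m)%N by move: npt; rewrite /t; case: (m) => //=; rewrite expn0; lia.
apply: (hsym2_horner_alg_neq0 (t := t)).
- exact: adjoin_prime_generator.
- by rewrite (dim_pPrimeChar _ cardF); have := odd_double_half m.-1; rewrite /t; lia.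
- apply/allP => _ /mapP[i _ ->].
  by rewrite monic_size_XnD // -(poly_def t (fun j => (a i j)%:R)) size_poly.
- by rewrite size_map l_size -(dvdn_pcharf (pchar_Fp p_prime)) bin2 -divn2 mulnC.
Qed.
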